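(* Let $n \ge 4$ and let $FQ_n$, $M_0$, $M_1$, $M_2$ be as defined in the context. Let $M$ be a perfect matching of $FQ_n$ such that $M \subseteq M_0 \cup M_1 \cup M_2$ and $M \neq M_i$ for every $i \in \{0,1,2\}$. Then the graph $FQ_n - M$ (obtained by deleting the edges of $M$, keeping all vertices) is not isomorphic to the hypercube $Q_n$.
   Context: The hypercube $Q_n$ has vertex set $\{0,1\}^n$, with $x=(x_1,\dots,x_n)$ and $y$ adjacent iff they differ in exactly one coordinate. For $x \in \{0,1\}^n$ let $\overline{x}$ denote the complement of $x$, i.e. every coordinate is flipped. The folded hypercube $FQ_n$ is the graph on $\{0,1\}^n$ whose edge set consists of all edges of $Q_n$ together with all edges $\{x,\overline{x}\}$ for $x \in \{0,1\}^n$ (these are called complement edges). Define the following edge sets of $FQ_n$: $M_1$ is the set of pairs $\{x,y\}$ differing exactly in coordinate $n$; $M_2 = \{\{x,\overline{x}\} : x \in \{0,1\}^n\}$; $M_0$ is the set of pairs $\{x,y\}$ differing exactly in coordinate $n-1$. *)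

From mathcomp Require Import all_boot.
Set Implicit Arguments. Unset Strict Implicit. Unset Printing Implicit Defensive.

(* Vertices of Q_n / FQ_n: {0,1}^n, coordinates 1..n are the indices 0..n-1. *)
Definition vtx (n : nat) := {ffun 'I_n -> bool}.

Definition differ_at n (x y : vtx n) (k : nat) : bool :=
  [forall j : 'I_n, (x j != y j) == (val j == k)].

Definition is_compl n (x y : vtx n) : bool := [forall j : 'I_n, y j == ~~ x j].

Definition Qadj n : rel (vtx n) := fun x y => [exists i : 'I_n, differ_at x y i].

Definition FQadj n : rel (vtx n) := fun x y => Qadj x y || is_compl x y.

Definition M1 n : rel (vtx n) := fun x y => differ_at x y n.-1.
Definition M2 n : rel (vtx n) := fun x y => is_compl x y.
Definition M0 n : rel (vtx n) := fun x y => differ_at x y n.-2.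

Definition perfect_matching (T : finType) (adj m : rel T) : Prop :=
  (forall x y, m x y = m y x) /\
  (forall x y, m x y -> adj x y) /\
  (forall x, #|[set y | m x y]| = 1).

Definition del_edges (T : finType) (adj m : rel T) : rel T :=
  fun x y => adj x y && ~~ m x y.

Definition isomorphic (T U : finType) (g : rel T) (h : rel U) : Prop :=
  exists f : T -> U, bijective f /\ forall x y, g x y = h (f x) (f y).

From mathcomp Require Import all_boot.
From mathcomp Require Import zify.
Set Implicit Arguments. Unset Strict Implicit. Unset Printing Implicit Defensive.

(* Every edge of FQ_n joins x to [flip d x] for a direction
   d : option 'I_n, where [Some k] flips coordinate k and [None] flips all
   coordinates; the direction of an edge is unique as soon as n > 1.
   A perfect matching M of FQ_n is therefore encoded by the direction
   [mdir M x] of the M-edge at x, and M x y <-> y = flip (mdir M x) x.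
   - If mdir M is invariant under every hypercube move it is constant, since
     Q_n is connected; then M is a single direction class, and the hypothesis
     M ⊆ M0 ∪ M1 ∪ M2 forces M ∈ {M0, M1, M2}, which is excluded.
   - Otherwise pick x and k with mdir M (flip k x) ≠ mdir M x, let z = flip k x,
     d = mdir M z and w = flip d z.  In FQ_n - M the distinct vertices x and w
     have exactly one common neighbour, namely flip d x; this uses the
     "two moves" lemma below, which needs n ≥ 4.  In Q_n two distinct vertices
     never have exactly one common neighbour, and this property is invariant
     under graph isomorphism, so FQ_n - M is not isomorphic to Q_n. *)

Definition dir_mask n (d : option 'I_n) (j : 'I_n) : bool :=
  if d is Some k then j == k else true.

Definition flip n (d : option 'I_n) (x : vtx n) : vtx n :=
  [ffun j => x j (+) dir_mask d j].

Lemma flipK n d (x : vtx n) : flip d (flip d x) = x.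
Proof. by apply/ffunP => j; rewrite !ffunE -addbA addbb addbF. Qed.

Lemma flipC n a b (x : vtx n) : flip a (flip b x) = flip b (flip a x).
Proof. by apply/ffunP => j; rewrite !ffunE -!addbA (addbC (dir_mask a j)). Qed.

Lemma flip2E n a b (x : vtx n) j :
  flip b (flip a x) j = x j (+) (dir_mask a j (+) dir_mask b j).
Proof. by rewrite !ffunE addbA. Qed.

Lemma exists_notin n (s : seq 'I_n) : size s < n -> exists j, j \notin s.
Proof.
move=> small; apply/existsP; rewrite -negb_forall; apply/negP => /forallP all_in.
have : #|'I_n| <= #|s|.
  by apply: subset_leq_card; apply/subsetP => j _; exact: all_in.
rewrite card_ord => /leq_trans/(_ (card_size s)).
by rewrite leqNgt small.
Qed.

Lemma flip_inj n a b (x : vtx n) : 1 < n -> flip a x = flip b x -> a = b.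
Proof.
move=> n_gt1 /ffunP eq_ab.
have mask_ab j : dir_mask a j = dir_mask b j.
  by move: (eq_ab j); rewrite !ffunE => /addbI.
clear eq_ab; case: a b mask_ab => [ka|] [kb|] //= mask_ab.
- by move: (mask_ab ka); rewrite eqxx => /esym/eqP ->.
- have [j] := exists_notin (s := [:: ka]) n_gt1; rewrite inE => /negbTE j_ka.
  by move: (mask_ab j); rewrite j_ka.
- have [j] := exists_notin (s := [:: kb]) n_gt1; rewrite inE => /negbTE j_kb.
  by move: (mask_ab j); rewrite j_kb.
Qed.

(* For n = 3 this fails: two coordinate
   moves may compose to a complement move followed by a coordinate move. *)
Lemma two_moves n (a b c : option 'I_n) (k : 'I_n) (x : vtx n) : 3 < n ->
  c != Some k -> flip b (flip a x) = flip c (flip (Some k) x) ->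
  (a = c /\ b = Some k) \/ (a = Some k /\ b = c).
Proof.
move=> n_gt3 c_k /ffunP eq_xw.
have mask_sum j : dir_mask a j (+) dir_mask b j = (j == k) (+) dir_mask c j.
  by move: (eq_xw j); rewrite !flip2E => /addbI.
clear eq_xw; have fresh (i1 i2 : 'I_n) : exists j, [&& j != i1, j != i2 & j != k].
  have [j] := exists_notin (s := [:: i1; i2; k]) (leq_ltn_trans (isT : 3 <= 3) n_gt3).
  by rewrite !inE !negb_or => ?; exists j.
case: c c_k mask_sum => [kc|] c_k mask_sum.
- have k_kc : k != kc by apply: contra c_k => /eqP ->.
  have at_k := mask_sum k; have at_kc := mask_sum kc.
  rewrite /= eqxx (negbTE k_kc) in at_k; rewrite /= eqxx eq_sym (negbTE k_kc) in at_kc.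
  case: a b mask_sum at_k at_kc => [ka|] [kb|] /= mask_sum at_k at_kc.
  + case: (eqVneq ka kc) at_k at_kc => [->|ka_kc] at_k at_kc.
      by left; split=> //; move: at_k; rewrite (negbTE k_kc) => /eqP ->.
    have kb_kc : kb = kc by apply/esym/eqP.
    have ka_k : ka = k by move: at_k; rewrite kb_kc (negbTE k_kc) addbF => /eqP ->.
    by right; rewrite ka_k kb_kc.
  + have [j /and3P[j_ka j_kc j_k]] := fresh ka kc.
    by move: (mask_sum j); rewrite /= (negbTE j_ka) (negbTE j_kc) (negbTE j_k).
  + have [j /and3P[j_kb j_kc j_k]] := fresh kb kc.
    by move: (mask_sum j); rewrite /= (negbTE j_kb) (negbTE j_kc) (negbTE j_k).
  + by [].
- case: a b mask_sum => [ka|] [kb|] /= mask_sum.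
  + have [j /and3P[j_ka j_kb j_k]] := fresh ka kb.
    by move: (mask_sum j); rewrite (negbTE j_ka) (negbTE j_kb) (negbTE j_k).
  + by right; move: (mask_sum k); rewrite eqxx addbT => /negbFE/eqP ->.
  + by left; move: (mask_sum k); rewrite eqxx => /negbFE/eqP ->.
  + have [j /and3P[_ _ j_k]] := fresh k k.
    by move: (mask_sum j); rewrite (negbTE j_k).
Qed.

Lemma differ_flip n (x y : vtx n) (k : 'I_n) : differ_at x y k = (y == flip (Some k) x).
Proof.
apply/forallP/eqP => [differ | ->] /=.
- apply/ffunP => j; rewrite ffunE /=; move: (differ j); rewrite val_eqE.
  by case: (x j); case: (y j); case: (j == k).
- by move=> j; rewrite ffunE /= val_eqE; case: (x j); case: (j == k).
Qed.

Lemma compl_flip n (x y : vtx n) : is_compl x y = (y == flip None x).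
Proof.
apply/forallP/eqP => [compl | ->].
- by apply/ffunP => j; rewrite ffunE addbT; apply/eqP.
- by move=> j; rewrite ffunE addbT.
Qed.

Lemma QadjE n (x y : vtx n) : Qadj x y = [exists k, y == flip (Some k) x].
Proof. by apply: eq_existsb => k; rewrite differ_flip. Qed.

Lemma FQadjP n (x y : vtx n) : FQadj x y -> exists d, y = flip d x.
Proof.
rewrite /FQadj QadjE compl_flip => /orP[/existsP[k /eqP ->]|/eqP ->].
- by exists (Some k).
- by exists None.
Qed.

Lemma FQadj_flip n d (x : vtx n) : FQadj x (flip d x).
Proof.
rewrite /FQadj QadjE compl_flip; case: d => [k|]; last by rewrite eqxx orbT.
by apply/orP; left; apply/existsP; exists k.
Qed.

(* Q_n is connected: a function invariant under all hypercube moves is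
   constant.  The walk from x to y copies y one coordinate at a time. *)
Lemma move_invariant_const n (T : eqType) (t : vtx n -> T) :
  (forall x k, t (flip (Some k) x) = t x) -> forall x y, t x = t y.
Proof.
move=> t_inv x y.
pose mix i := [ffun j : 'I_n => if j < i then y j else x j].
have t_mix i : i <= n -> t x = t (mix i).
  elim: i => [|i IH] lt_i; first by congr t; apply/ffunP => j; rewrite ffunE ltn0.
  rewrite IH ?(ltnW lt_i) //; pose i' := Ordinal lt_i.
  have mix_eq : mix i.+1 = if x i' == y i' then mix i else flip (Some i') (mix i).
    apply/ffunP => j; rewrite [LHS]ffunE.
    have -> : (j < i.+1) = (j == i') || (j < i) by rewrite ltnS leq_eqVlt.
    case: (eqVneq (x i') (y i')) => [x_y|x_y]; rewrite !ffunE /=;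
      case: (eqVneq j i') => [->|j_i] //=; rewrite ?ltnn ?addbF //.
    by move: x_y; case: (x i'); case: (y i').
  by rewrite mix_eq; case: eqVneq; rewrite ?t_inv.
rewrite (t_mix n (leqnn n)); congr t; apply/ffunP => j; by rewrite ffunE ltn_ord.
Qed.

Lemma Q_second_common_neighbour n (X Y U : vtx n) : X != Y -> Qadj X U -> Qadj U Y ->
  exists V, [/\ V != U, Qadj X V & Qadj V Y].
Proof.
move=> X_Y; rewrite !QadjE => /existsP[a /eqP U_def] /existsP[b /eqP Y_def].
have a_b : a != b by apply: contra X_Y => /eqP a_b; rewrite Y_def U_def a_b flipK.
exists (flip (Some b) X); split; rewrite ?QadjE.
- apply/eqP => /(congr1 (fun v : vtx n => v a)).
  by rewrite U_def !ffunE /= eqxx (negbTE a_b); case: (X a).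
- by apply/existsP; exists b.
- by apply/existsP; exists a; rewrite Y_def U_def flipC.
Qed.

Definition unique_common_nb (T : finType) (g : rel T) (x w u : T) : Prop :=
  [/\ x != w, g x u, g u w & forall v, g x v -> g v w -> v = u].

Lemma Q_no_unique_common_nb n (x w u : vtx n) : ~ unique_common_nb (@Qadj n) x w u.
Proof.
case=> x_w xu uw only_u; have [v [v_u xv vw]] := Q_second_common_neighbour x_w xu uw.
by move: v_u; rewrite (only_u v xv vw) eqxx.
Qed.

Lemma iso_unique_common_nb (T U : finType) (g : rel T) (h : rel U) (x w u : T) :
  isomorphic g h -> unique_common_nb g x w u -> exists x' w' u', unique_common_nb h x' w' u'.
Proof.
case=> f [[f' fK f'K] g_h] [x_w xu uw only_u]; exists (f x), (f w), (f u); split.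
- by apply: contra x_w => /eqP/(can_inj fK) ->.
- by rewrite -g_h.
- by rewrite -g_h.
- by move=> v; rewrite -{1 2}(f'K v) -!g_h => /only_u /[apply] <-; rewrite f'K.
Qed.

Definition dir_class n (R : rel (vtx n)) : Prop :=
  exists d, forall x y, R x y = (y == flip d x).

Lemma M0_class n : 1 < n -> dir_class (@M0 n).
Proof.
move=> n_gt1; have lt_idx : n.-2 < n by lia.
by exists (Some (Ordinal lt_idx)) => x y; exact: (differ_flip x y (Ordinal lt_idx)).
Qed.

Lemma M1_class n : 0 < n -> dir_class (@M1 n).
Proof.
move=> n_gt0; have lt_idx : n.-1 < n by lia.
by exists (Some (Ordinal lt_idx)) => x y; exact: (differ_flip x y (Ordinal lt_idx)).
Qed.

Lemma M2_class n : dir_class (@M2 n).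
Proof. by exists None => x y; exact: compl_flip. Qed.

Lemma dir_class_share_edge n (R S : rel (vtx n)) x y : 1 < n ->
  dir_class R -> dir_class S -> R x y -> S x y -> forall u v, R u v = S u v.
Proof.
move=> n_gt1 [d R_d] [e S_e]; rewrite R_d S_e => /eqP -> /eqP /(flip_inj n_gt1) d_e u v.
by rewrite R_d S_e d_e.
Qed.

(* The direction of the M-edge at x (meaningful when M is a perfect matching
   of FQ_n). *)
Definition mdir n (M : rel (vtx n)) (x : vtx n) : option 'I_n :=
  odflt None [pick d | M x (flip d x)].

Section PerfectMatching.
Variables (n : nat) (M : rel (vtx n)).
Hypothesis n_gt3 : 3 < n.
Hypothesis M_pm : perfect_matching (@FQadj n) M.

Lemma M_partner x : exists p, forall y, M x y = (y == p).
Proof.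
case: M_pm => _ [_ card1]; have /cards1P[p Mx_p] : #|[set z | M x z]| == 1 by rewrite card1.
by exists p => y; rewrite -in_set1 -Mx_p inE.
Qed.

Lemma partner_unique x y y' : M x y -> M x y' -> y = y'.
Proof. by have [p Mx_p] := M_partner x; rewrite !Mx_p => /eqP -> /eqP ->. Qed.

Lemma M_mdir x : M x (flip (mdir M x) x).
Proof.
rewrite /mdir; case: pickP => [d //|no_dir].
have [p Mx_p] := M_partner x; have Mxp : M x p by rewrite Mx_p.
have [d p_def] : exists d, p = flip d x by case: M_pm => _ [adj _]; exact: FQadjP (adj _ _ Mxp).
by move: (no_dir d); rewrite -p_def Mxp.
Qed.

Lemma ME x y : M x y = (y == flip (mdir M x) x).
Proof. by apply/idP/eqP => [Mxy | ->]; [exact: partner_unique Mxy (M_mdir x) | exact: M_mdir]. Qed.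

Lemma mdir_eq x d : M x (flip d x) -> mdir M x = d.
Proof. by rewrite ME => /eqP /esym /flip_inj; apply; lia. Qed.

Lemma unique_common_nb_at x k (z := flip (Some k) x) (d := mdir M z) :
  d != mdir M x -> unique_common_nb (del_edges (@FQadj n) M) x (flip d z) (flip d x).
Proof.
move=> d_x; have n_gt1 : 1 < n by lia.
have Mzw : M z (flip d z) by exact: M_mdir.
have M_sym : forall u v, M u v = M v u by case: M_pm.
have d_k : d != Some k.
  apply: contraNneq d_x => d_k; apply/eqP/esym/mdir_eq.
  by move: Mzw; rewrite M_sym d_k /z flipK.
split.
- apply: contraNneq d_k => x_w; apply/eqP/(flip_inj (x := x) n_gt1).
  by rewrite [in LHS]x_w flipK.
- rewrite /del_edges FQadj_flip /=; apply: contra d_x => /mdir_eq ->; exact: eqxx.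
- rewrite /del_edges /z flipC FQadj_flip /=; apply: contra d_k => M_u_w.
  have w_u : M (flip d z) (flip d x) by rewrite M_sym /z flipC.
  have w_z : M (flip d z) z by rewrite M_sym.
  by have /(flip_inj n_gt1) -> := partner_unique w_u w_z.
- move=> v /andP[/FQadjP[a ->] _] /andP[/FQadjP[b w_def] not_Mvw].
  have [[-> _]|[a_k _]] := two_moves n_gt3 d_k (esym w_def); first by [].
  by move: not_Mvw; rewrite a_k -/z Mzw.
Qed.

Lemma matching_dichotomy :
  dir_class M \/
  exists x w u, unique_common_nb (del_edges (@FQadj n) M) x w u.
Proof.
case: (boolP [forall x, forall k, mdir M (flip (Some k) x) == mdir M x]) => [inv|].
- left; exists (mdir M [ffun=> false]) => x y.
  rewrite ME (@move_invariant_const _ _ (mdir M) _ x [ffun=> false]) // => z k.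
  by move/forallP: inv => /(_ z) /forallP /(_ k) /eqP.
- rewrite negb_forall => /existsP[x]; rewrite negb_forall => /existsP[k moved].
  by right; do 3!eexists; exact: unique_common_nb_at moved.
Qed.

End PerfectMatching.

Theorem theorem2 (n : nat) (M : rel (vtx n)) :
  4 <= n ->
  perfect_matching (@FQadj n) M ->
  (forall x y, M x y -> [|| M0 x y, M1 x y | M2 x y]) ->
  ~ (forall x y, M x y = M0 x y) ->
  ~ (forall x y, M x y = M1 x y) ->
  ~ (forall x y, M x y = M2 x y) ->
  ~ isomorphic (del_edges (@FQadj n) M) (@Qadj n).
Proof.
move=> n_ge4 M_pm M_sub not_M0 not_M1 not_M2 iso.
have n_gt1 : 1 < n by lia.
have [M_class | [x [w [u M_ucn]]]] := matching_dichotomy n_ge4 M_pm.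
- (* M is a direction class; its edges lie in one of M0, M1, M2, hence it is that class. *)
  have [x [y Mxy]] : exists x y, M x y.
    by case: M_class => d M_d; exists [ffun=> false], (flip d [ffun=> false]); rewrite M_d.
  case/or3P: (M_sub _ _ Mxy) => [M0xy|M1xy|M2xy].
  + exact/not_M0/(dir_class_share_edge n_gt1 M_class (M0_class n_gt1) Mxy M0xy).
  + exact/not_M1/(dir_class_share_edge n_gt1 M_class (M1_class (ltnW n_gt1)) Mxy M1xy).
  + exact/not_M2/(dir_class_share_edge n_gt1 M_class (@M2_class n) Mxy M2xy).
-
  have [x' [w' [u' Q_ucn]]] := iso_unique_common_nb iso M_ucn.
  exact: Q_no_unique_common_nb Q_ucn.
Qed.
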